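(* For every maximal consistent set $X_0$, the canonical epistemic transition system $ETS(X_0)$ is regular, i.e., for every state $w\in W$ and every $\mathbf{s}\in\Phi^{\mathcal{A}}$ there is $w'\in W$ with $(w,\mathbf{s},w')\in M$.
   Context: Fix a set of agents $\mathcal{A}$; a coalition is a subset of $\mathcal{A}$. Language $\Phi$: $\phi ::= p \mid \neg\phi \mid \phi\to\phi \mid \mathsf{K}_C\phi \mid \mathsf{H}_C\phi$ ($C\subseteq\mathcal{A}$). Proof system: propositional tautologies; Truth $\mathsf{K}_C\phi\to\phi$; Negative Introspection $\neg\mathsf{K}_C\phi\to\mathsf{K}_C\neg\mathsf{K}_C\phi$; Distributivity $\mathsf{K}_C(\phi\to\psi)\to(\mathsf{K}_C\phi\to\mathsf{K}_C\psi)$; Monotonicity $\mathsf{K}_C\phi\to\mathsf{K}_D\phi$ ($C\subseteq D$); Strategic Positive Introspection $\mathsf{H}_C\phi\to\mathsf{K}_C\mathsf{H}_C\phi$; Cooperation $\mathsf{H}_C(\phi\to\psi)\to(\mathsf{H}_D\phi\to\mathsf{H}_{C\cup D}\psi)$ ($C\cap D=\varnothing$); Empty Coalition $\mathsf{K}_\varnothing\phi\to\mathsf{H}_\varnothing\phi$; Perfect Recall $\mathsf{H}_D\phi\to\mathsf{H}_D\mathsf{K}_C\phi$ ($D\subseteq C\ne\varnothing$); Unachievability of Falsehood $\neg\mathsf{H}_C\bot$; rules Necessitation ($\phi/\mathsf{K}_C\phi$), Strategic Necessitation ($\phi/\mathsf{H}_C\phi$), Modus Ponens. Consistency and maximal consistency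 are with respect to this system. Canonical system $ETS(X_0)=(W,\{\sim_a\}_{a\in\mathcal{A}},\Phi,M,\pi)$ for a maximal consistent $X_0$: $W$ is the set of all finite sequences $X_0,C_1,X_1,\dots,C_n,X_n$ ($n\ge0$) where each $X_i$ is a maximal consistent set, each $C_i\subseteq\mathcal{A}$, and $\{\phi\mid\mathsf{K}_{C_i}\phi\in X_{i-1}\}\subseteq X_i$ for $i\ge1$. For $w=X_0,C_1,\dots,C_n,X_n$ and $w'=X_0,C'_1,\dots,C'_m,X'_m$, $w\sim_a w'$ iff there is $k\le\min\{n,m\}$ with $X_i=X'_i$ and $C_i=C'_i$ for $0<i\le k$, $a\in C_i$ for $k<i\le n$ and $a\in C'_i$ for $k<i\le m$. The domain of choices is $\Phi$. $hd(w)$ denotes the last set of $w$. $(w,\mathbf{s},w')\in M$ (for $\mathbf{s}\in\Phi^{\mathcal{A}}$) iff for every coalition $D$ and formula $\phi$, if $\mathsf{H}_D\phi\in hd(w)$ and $(\mathbf{s})_a=\phi$ for all $a\in D$, then $\phi\in hd(w')$. $\pi(p)=\{w\in W\mid p\in hd(w)\}$. *)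

From Stdlib Require Import List.
Import ListNotations.

Set Implicit Arguments.

Definition coalition (Agent : Type) := Agent -> Prop.

Inductive form (Agent Var : Type) : Type :=
| Atom : Var -> form Agent Var
| Neg : form Agent Var -> form Agent Var
| Imp : form Agent Var -> form Agent Var -> form Agent Var
| Know : coalition Agent -> form Agent Var -> form Agent Var
| Howto : coalition Agent -> form Agent Var -> form Agent Var.

Arguments Atom {Agent Var} _.
Arguments Neg {Agent Var} _.
Arguments Imp {Agent Var} _ _.
Arguments Know {Agent Var} _ _.
Arguments Howto {Agent Var} _ _.

Section Logic.
Context {Agent Var : Type}.
Local Notation form := (form Agent Var).

(* propositional evaluation, treating atoms and modal formulas as atoms *)
Fixpoint teval (v : form -> bool) (f : form) : bool :=
  match f with
  | Neg g => negb (teval v g)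
  | Imp g h => implb (teval v g) (teval v h)
  | _ => v f
  end.

Definition tautology (f : form) : Prop := forall v, teval v f = true.

Definition csubset (C D : coalition Agent) : Prop := forall a, C a -> D a.
Definition cdisjoint (C D : coalition Agent) : Prop := forall a, C a -> D a -> False.
Definition cunion (C D : coalition Agent) : coalition Agent := fun a => C a \/ D a.
Definition cempty : coalition Agent := fun _ => False.

(* falsehood: the negation of a tautology phi -> phi (schematic in phi) *)
Definition fbot (phi : form) : form := Neg (Imp phi phi).

Inductive derivable : form -> Prop :=
| d_taut phi : tautology phi -> derivable phi
| d_truth C phi : derivable (Imp (Know C phi) phi)
| d_negintro C phi :
    derivable (Imp (Neg (Know C phi)) (Know C (Neg (Know C phi))))
| d_distr C phi psi :
    derivable (Imp (Know C (Imp phi psi)) (Imp (Know C phi) (Know C psi)))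
| d_mono C D phi : csubset C D -> derivable (Imp (Know C phi) (Know D phi))
| d_spi C phi : derivable (Imp (Howto C phi) (Know C (Howto C phi)))
| d_coop C D phi psi : cdisjoint C D ->
    derivable (Imp (Howto C (Imp phi psi))
                   (Imp (Howto D phi) (Howto (cunion C D) psi)))
| d_empty phi : derivable (Imp (Know cempty phi) (Howto cempty phi))
| d_recall C D phi : csubset D C -> (exists a, C a) ->
    derivable (Imp (Howto D phi) (Howto D (Know C phi)))
| d_unach C phi : derivable (Neg (Howto C (fbot phi)))
| d_nec C phi : derivable phi -> derivable (Know C phi)
| d_snec C phi : derivable phi -> derivable (Howto C phi)
| d_mp phi psi : derivable phi -> derivable (Imp phi psi) -> derivable psi.

Definition imps (l : list form) (psi : form) : form := fold_right Imp psi l.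

Definition inconsistent (X : form -> Prop) : Prop :=
  exists (l : list form) (psi : form),
    (forall phi, In phi l -> X phi) /\
    derivable (imps l psi) /\ derivable (imps l (Neg psi)).

Definition consistent (X : form -> Prop) : Prop := ~ inconsistent X.

Definition maximal_consistent (X : form -> Prop) : Prop :=
  consistent X /\
  forall Y : form -> Prop, consistent Y ->
    (forall phi, X phi -> Y phi) -> forall phi, Y phi -> X phi.

(* A state X0,C1,X1,...,Cn,Xn is represented by X0 together with the list
   [(C1,X1);...;(Cn,Xn)]. *)
Definition state := list (coalition Agent * (form -> Prop)).

Fixpoint valid_tail (prev : form -> Prop) (l : state) : Prop :=
  match l with
  | [] => True
  | (C, X) :: l' =>
      maximal_consistent X /\ (forall phi, prev (Know C phi) -> X phi) /\
      valid_tail X l'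
  end.

Definition in_W (X0 : form -> Prop) (w : state) : Prop :=
  maximal_consistent X0 /\ valid_tail X0 w.

Definition hd_state (X0 : form -> Prop) (w : state) : form -> Prop :=
  last (map snd w) X0.

(* mechanism M of ETS(X0); the domain of choices is the set of formulas *)
Definition ETS_M (X0 : form -> Prop) (w : state) (s : Agent -> form)
    (w' : state) : Prop :=
  forall (D : coalition Agent) (phi : form),
    hd_state X0 w (Howto D phi) -> (forall a, D a -> s a = phi) ->
    hd_state X0 w' phi.

Definition ETS_regular (X0 : form -> Prop) : Prop :=
  forall w : state, in_W X0 w ->
  forall s : Agent -> form,
  exists w' : state, in_W X0 w' /\ ETS_M X0 w s w'.

End Logic.

(* Let X be the last set of w and s a profile of choices.  Collect every formula
   phi such that some coalition D has H_D phi in X and all of D choose phi.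
   This set is consistent: coalitions choosing different formulas are disjoint,
   so if phi_1, ..., phi_n derived a contradiction, Strategic Necessitation and
   repeated Cooperation would put H_C bot into X, against Unachievability of
   Falsehood.  It contains every phi with K_empty phi in X (Empty Coalition, with
   D empty), so a Lindenbaum extension X' of it gives the successor
   w, empty, X' of w required by M. *)
From Stdlib Require Import List Classical ClassicalEpsilon.
From mathcomp Require classical_sets.
Import ListNotations.

Lemma list_in_chain_union {T : Type} (Y : T -> Prop) (F : (T -> Prop) -> Prop)
    (l : list T) :
  (forall A B, F A -> F B -> (forall x, A x -> B x) \/ (forall x, B x -> A x)) ->
  (forall x, In x l -> Y x \/ exists2 A, F A & A x) ->
  (forall x, In x l -> Y x) \/ exists2 A, F A & forall x, In x l -> Y x \/ A x.
Proof.
  intros Hchain. induction l as [|y l IH]; intros Hl.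
  - left. intros _ [].
  - destruct (IH (fun x Hx => Hl x (or_intror Hx))) as [HlY | [B HB HlB]];
      destruct (Hl y (or_introl eq_refl)) as [Hy | [A HA Hy]].
    + left. intros x [<- | Hx]; auto.
    + right. exists A; [exact HA|]. intros x [<- | Hx]; auto.
    + right. exists B; [exact HB|]. intros x [<- | Hx]; auto.
    + right. destruct (Hchain A B HA HB) as [HAB | HBA].
      * exists B; [exact HB|]. intros x [<- | Hx]; auto.
      * exists A; [exact HA|]. intros x [<- | Hx]; [auto|].
        destruct (HlB x Hx); auto.
Qed.

Lemma last_cons_default {T : Type} (l : list T) (x d : T) :
  last (x :: l) d = last l x.
Proof.
  revert x d. induction l as [|y l IH]; intros x d; [reflexivity|].
  change (last (y :: l) d = last (y :: l) x). rewrite !IH. reflexivity.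
Qed.

Section CanonicalSystem.
Context {Agent Var : Type}.
Local Notation form := (form Agent Var).
Local Notation state := (@state Agent Var).

(* Coalitions are predicates, so equality of formulas is decidable only classically. *)
Let form_eq_dec (x y : form) : {x = y} + {x <> y} :=
  excluded_middle_informative (x = y).

Lemma teval_imps (v : form -> bool) (l : list form) (chi : form) :
  teval v (imps l chi) = true <->
  ((forall x, In x l -> teval v x = true) -> teval v chi = true).
Proof.
  induction l as [|y l IH]; simpl.
  - split; auto.
  - destruct (teval v y) eqn:Ey; simpl.
    + rewrite IH. split; intros H Hl; apply H; auto.
      intros x [<- | Hx]; auto.
    + split; auto. intros _ H. rewrite (H y (or_introl eq_refl)) in Ey.
      discriminate.
Qed.

Lemma derivable_imps_elim (hs : list form) (chi : form) :
  (forall h, In h hs -> derivable h) -> derivable (imps hs chi) -> derivable chi.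
Proof.
  induction hs as [|h hs IH]; simpl; intros Hhs Hd; [exact Hd|].
  apply IH; [auto|]. exact (d_mp (Hhs h (or_introl eq_refl)) Hd).
Qed.

Lemma derivable_taut_consequence (hs : list form) (chi : form) :
  (forall h, In h hs -> derivable h) ->
  (forall v, (forall h, In h hs -> teval v h = true) -> teval v chi = true) ->
  derivable chi.
Proof.
  intros Hhs Hv. apply (derivable_imps_elim hs); [exact Hhs|].
  apply d_taut. intros v. apply teval_imps, Hv.
Qed.

Lemma derivable_imps_cut (l l' : list form) (phi chi : form) :
  derivable (imps l phi) -> derivable (imps l' chi) ->
  derivable (imps (l ++ remove form_eq_dec phi l') chi).
Proof.
  intros Hphi Hchi.
  apply (derivable_taut_consequence [imps l phi; imps l' chi]).
  { intros h [<- | [<- | []]]; assumption. }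
  intros v Hv. apply teval_imps. intros Hall.
  assert (Hphiv : teval v phi = true).
  { apply (teval_imps v l phi); [apply Hv; simpl; auto|].
    intros x Hx. apply Hall, in_or_app. auto. }
  apply (teval_imps v l' chi); [apply Hv; simpl; auto|].
  intros x Hx. destruct (form_eq_dec x phi) as [-> | Hne]; [exact Hphiv|].
  apply Hall, in_or_app. right. apply in_in_remove; assumption.
Qed.

Lemma derivable_imps_bot (l : list form) (psi : form) :
  derivable (imps l psi) -> derivable (imps l (Neg psi)) ->
  derivable (imps (nodup form_eq_dec l) (fbot psi)).
Proof.
  intros Hpos Hneg.
  apply (derivable_taut_consequence [imps l psi; imps l (Neg psi)]).
  { intros h [<- | [<- | []]]; assumption. }
  intros v Hv. apply teval_imps. intros Hall.
  assert (Hl : forall x, In x l -> teval v x = true).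
  { intros x Hx. apply Hall, nodup_In, Hx. }
  assert (Hpsi := proj1 (teval_imps v l psi) (Hv _ (or_introl eq_refl)) Hl).
  assert (Hnpsi := proj1 (teval_imps v l (Neg psi))
                     (Hv _ (or_intror (or_introl eq_refl))) Hl).
  simpl in Hnpsi. rewrite Hpsi in Hnpsi. discriminate.
Qed.

Lemma consistent_subset (X Y : form -> Prop) :
  consistent X -> (forall phi, Y phi -> X phi) -> consistent Y.
Proof.
  intros HX HYX [l [psi [Hl Hd]]]. apply HX. exists l, psi. split; auto.
Qed.

Section MaximalConsistent.
Variable X : form -> Prop.
Hypothesis HX : maximal_consistent X.

Lemma mc_derive (l : list form) (phi : form) :
  (forall x, In x l -> X x) -> derivable (imps l phi) -> X phi.
Proof.
  intros Hl Hd. destruct HX as [Hcons Hmax].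
  apply (Hmax (fun x => X x \/ x = phi)); [| auto | auto].
  intros [l' [psi [Hl' [Hpos Hneg]]]]. apply Hcons.
  exists (l ++ remove form_eq_dec phi l'), psi.
  split; [| split; apply derivable_imps_cut; assumption].
  intros x Hx. destruct (in_app_or _ _ _ Hx) as [Hin | Hin]; [auto|].
  apply in_remove in Hin. destruct Hin as [Hin Hne].
  destruct (Hl' x Hin); [assumption | contradiction].
Qed.

Lemma mc_theorem (phi : form) : derivable phi -> X phi.
Proof. apply (mc_derive []). intros _ []. Qed.

Lemma mc_mp (phi psi : form) : X phi -> X (Imp phi psi) -> X psi.
Proof.
  intros Hphi Himp. apply (mc_derive [Imp phi psi; phi]).
  - intros x [<- | [<- | []]]; assumption.
  - apply d_taut. intros v. simpl. destruct (teval v phi), (teval v psi); reflexivity.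
Qed.

Lemma mc_not_both (phi : form) : X phi -> X (Neg phi) -> False.
Proof.
  intros Hpos Hneg. apply (proj1 HX). exists [phi; Neg phi], phi.
  split; [intros x [<- | [<- | []]]; assumption|].
  split; apply d_taut; intros v; simpl;
    destruct (teval v phi); reflexivity.
Qed.

Lemma mc_cooperation (C D : coalition Agent) (phi psi : form) :
  cdisjoint C D -> X (Howto C (Imp phi psi)) -> X (Howto D phi) ->
  X (Howto (cunion C D) psi).
Proof.
  intros Hdisj HC HD. apply (mc_mp _ _ HD), (mc_mp _ _ HC), mc_theorem, d_coop, Hdisj.
Qed.

End MaximalConsistent.

Definition enforced (X : form -> Prop) (s : Agent -> form) (phi : form) : Prop :=
  exists D, X (Howto D phi) /\ forall a, D a -> s a = phi.

Lemma howto_imps_enforced (X : form -> Prop) (s : Agent -> form) (l : list form) :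
  maximal_consistent X -> NoDup l -> (forall x, In x l -> enforced X s x) ->
  forall C chi, X (Howto C (imps l chi)) -> (forall a, C a -> ~ In (s a) l) ->
  exists C', X (Howto C' chi).
Proof.
  intros HX. induction l as [|phi l IH]; simpl; intros Hnd Hl C chi HC Hdisj.
  { exists C. exact HC. }
  apply NoDup_cons_iff in Hnd. destruct Hnd as [Hphi Hnd].
  destruct (Hl phi (or_introl eq_refl)) as [D [HD Hs]].
  apply (IH Hnd (fun x Hx => Hl x (or_intror Hx)) (cunion C D)).
  - apply (mc_cooperation X HX C D phi); [| exact HC | exact HD].
    intros a HCa HDa. apply (Hdisj a HCa). left. symmetry. apply Hs, HDa.
  - intros a [HCa | HDa].
    + intros Hin. apply (Hdisj a HCa). right. exact Hin.
    + rewrite (Hs a HDa). exact Hphi.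
Qed.

Lemma enforced_consistent (X : form -> Prop) (s : Agent -> form) :
  maximal_consistent X -> consistent (enforced X s).
Proof.
  intros HX [l [psi [Hl [Hpos Hneg]]]].
  set (l' := nodup form_eq_dec l).
  assert (Hbot : X (Howto cempty (imps l' (fbot psi)))).
  { apply (mc_theorem X HX), d_snec, derivable_imps_bot; assumption. }
  destruct (howto_imps_enforced X s l' HX (NoDup_nodup _ l)
              (fun x Hx => Hl x (proj1 (nodup_In _ l x) Hx)) cempty _ Hbot)
    as [C HC].
  { intros a []. }
  exact (mc_not_both X HX _ HC (mc_theorem X HX _ (d_unach C psi))).
Qed.

Lemma know_empty_enforced (X : form -> Prop) (s : Agent -> form) (phi : form) :
  maximal_consistent X -> X (Know cempty phi) -> enforced X s phi.
Proof.
  intros HX Hk. exists cempty. split; [| intros a []].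
  exact (mc_mp X HX _ _ Hk (mc_theorem X HX _ (d_empty phi))).
Qed.

Lemma lindenbaum (Y : form -> Prop) :
  consistent Y -> exists X, maximal_consistent X /\ forall phi, Y phi -> X phi.
Proof.
  intros HY.
  destruct (@classical_sets.Zorn_bigcup form (fun A => consistent (fun x => Y x \/ A x)))
    as [A [HA Hmax]].
  - intros F HF Hchain [l [psi [Hl Hd]]].
    destruct (list_in_chain_union Y F l Hchain Hl) as [HlY | [B HB HlB]].
    + apply HY. exists l, psi. auto.
    + apply (HF B HB). exists l, psi. auto.
  - exists (fun x => Y x \/ A x). split; [split; [exact HA|] | auto].
    intros Z HZ HYAZ phi HZphi. apply NNPP. intros Hphi.
    apply (Hmax Z).
    + split.
      * intros x Hx. apply HYAZ. right. exact Hx.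
      * intros HZA. apply Hphi. right. exact (HZA phi HZphi).
    + apply (consistent_subset Z); [exact HZ|]. intros x [Hx | Hx]; auto.
Qed.

Lemma hd_state_cons (P X : form -> Prop) (C : coalition Agent) (w : state) :
  hd_state P ((C, X) :: w) = hd_state X w.
Proof. apply last_cons_default. Qed.

Lemma hd_state_snoc (P X : form -> Prop) (C : coalition Agent) (w : state) :
  hd_state P (w ++ [(C, X)]) = X.
Proof. unfold hd_state. rewrite map_app. apply last_last. Qed.

Lemma hd_state_mc (P : form -> Prop) (w : state) :
  maximal_consistent P -> valid_tail P w -> maximal_consistent (hd_state P w).
Proof.
  revert P. induction w as [|[C X] w IH]; intros P HP Hw; [exact HP|].
  destruct Hw as [HX [_ Hw]]. rewrite hd_state_cons. apply IH; assumption.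
Qed.

Lemma valid_tail_snoc (P X : form -> Prop) (C : coalition Agent) (w : state) :
  valid_tail P w -> maximal_consistent X ->
  (forall phi, hd_state P w (Know C phi) -> X phi) ->
  valid_tail P (w ++ [(C, X)]).
Proof.
  revert P. induction w as [|[C' X'] w IH]; intros P Hw HX Hk.
  - simpl. auto.
  - destruct Hw as [HX' [Hk' Hw]]. simpl. split; [exact HX' | split; [exact Hk' |]].
    apply IH; [exact Hw | exact HX |]. intros phi Hphi.
    apply Hk. rewrite hd_state_cons. exact Hphi.
Qed.

End CanonicalSystem.

Theorem lemma25 (Agent Var : Type) (X0 : form Agent Var -> Prop) :
  maximal_consistent X0 -> ETS_regular X0.
Proof.
  intros HX0 w [_ Hw] s.
  assert (HX : maximal_consistent (hd_state X0 w)) by (apply hd_state_mc; assumption).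
  destruct (lindenbaum _ (enforced_consistent _ s HX)) as [X' [HX' Henf]].
  exists (w ++ [(cempty, X')]). split.
  - split; [exact HX0|]. apply valid_tail_snoc; [exact Hw | exact HX' |].
    intros phi Hk. apply Henf, know_empty_enforced; assumption.
  - intros D phi HD Hs. rewrite hd_state_snoc. apply Henf. exists D. auto.
Qed.
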